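(* Let $a:\mathbb{R}_{\ge 0}\to\mathbb{R}_{>0}$ be a continuous positive function converging to a constant $a^*>0$ at rate at least $\rho_a>0$. Consider the system \[ \dot y=y\bigl(1-a(t)y\bigr),\qquad \dot x=1-yz,\qquad \dot z=z(1-yz), \] with initial values $y(0)>0$, $z(0)>0$ and $x(0)=\ln z(0)$ (and assume the solution exists for all $t\ge0$). Then $y(t)\to 1/a^*$, $z(t)\to a^*$, $x(t)=\ln z(t)$ for all $t\ge 0$, and $x(t)\to\ln a^*$ at rate at least $\min\{\rho_a,1\}$. *)

From Stdlib Require Import Reals Lra.
From Coquelicot Require Import Coquelicot.
Open Scope R_scope.

(* "f converges to L at rate at least rho":
   limsup_{t->oo} (1/t) ln |f t - L| <= -rho, i.e. for every r < rho there is
   a constant C with |f t - L| <= C e^{-r t} for all t >= 0. *)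
Definition conv_rate_atleast (f : R -> R) (L rho : R) : Prop :=
  forall r, r < rho -> exists C, forall t, 0 <= t -> Rabs (f t - L) <= C * exp (- r * t).

Definition continuous_on_nonneg (f : R -> R) : Prop :=
  (forall t, 0 < t -> continuous f t) /\ filterlim f (at_right 0) (locally (f 0)).

From Stdlib Require Import Reals Lra.
From Coquelicot Require Import Coquelicot.
Open Scope R_scope.

(* Once y and z are known to be positive, u = 1/y and p = 1/z solve the linear
   equations u' = -u + a and p' = -p + y.  Variation of constants passes every
   exponential rate r < 1 of the forcing term on to the solution, so u -> a* and
   then p -> 1/a* at every rate below min(rho_a, 1); since u and p stay above a
   positive constant, the same rates hold for y = 1/u, z = 1/p and ln z.
   Finally z e^(-x) has zero derivative, whence x = ln z. *)

(* [f] on [0, +oo), extended to the left by the constant [f 0]; continuity of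
   this extension on all of R gives access to the global MVT, IVT and
   extreme-value theorems. *)
Definition clamped_continuous (f : R -> R) : Prop :=
  forall t, continuous (fun s => f (Rmax s 0)) t.

Lemma clamped_continuous_of_nonneg (f : R -> R) :
  continuous_on_nonneg f -> clamped_continuous f.
Proof.
  intros [Hpos H0] t.
  destruct (Rtotal_order t 0) as [Hlt|[->|Hgt]].
  - apply continuous_ext_loc with (fun _ => f 0); [|apply continuous_const].
    apply locally_interval with m_infty 0; simpl; auto.
    intros s _ Hs; rewrite Rmax_right; lra.
  - intros P HP; rewrite Rmax_left in HP by lra.
    specialize (H0 P HP); unfold filtermap, at_right, within in H0.
    apply filter_imp with (2 := H0); intros s Hs.
    destruct (Rle_dec s 0).
    + rewrite Rmax_right by lra; now apply locally_singleton.
    + rewrite Rmax_left by lra; apply Hs; lra.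
  - apply continuous_ext_loc with f; [|now apply Hpos].
    apply locally_interval with 0 p_infty; simpl; auto.
    intros s Hs _; rewrite Rmax_left; lra.
Qed.

Lemma clamped_continuous_of_continuous (f : R -> R) :
  (forall t, continuous f t) -> clamped_continuous f.
Proof.
  intros H; apply clamped_continuous_of_nonneg; split; [intros; apply H|].
  eapply filterlim_filter_le_1; [apply filter_le_within|apply H].
Qed.

Lemma clamped_continuous_const (c : R) : clamped_continuous (fun _ => c).
Proof. intros t; apply continuous_const. Qed.

Lemma clamped_continuous_id : clamped_continuous (fun s => s).
Proof. apply clamped_continuous_of_continuous, continuous_id. Qed.

Lemma clamped_continuous_plus (f g : R -> R) :
  clamped_continuous f -> clamped_continuous g -> clamped_continuous (fun s => f s + g s).
Proof. intros Hf Hg t; apply (continuous_plus (fun s => f (Rmax s 0))); auto. Qed.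

Lemma clamped_continuous_opp (f : R -> R) :
  clamped_continuous f -> clamped_continuous (fun s => - f s).
Proof. intros Hf t; apply (continuous_opp (fun s => f (Rmax s 0))); auto. Qed.

Lemma clamped_continuous_minus (f g : R -> R) :
  clamped_continuous f -> clamped_continuous g -> clamped_continuous (fun s => f s - g s).
Proof.
  intros Hf Hg; apply (clamped_continuous_plus f (fun s => - g s)); auto.
  now apply clamped_continuous_opp.
Qed.

Lemma clamped_continuous_mult (f g : R -> R) :
  clamped_continuous f -> clamped_continuous g -> clamped_continuous (fun s => f s * g s).
Proof. intros Hf Hg t; apply (continuous_mult (fun s => f (Rmax s 0))); auto. Qed.

Lemma clamped_continuous_exp (f : R -> R) :
  clamped_continuous f -> clamped_continuous (fun s => exp (f s)).
Proof. intros Hf t; apply (continuous_exp_comp (fun s => f (Rmax s 0))); auto. Qed.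

Lemma clamped_continuous_inv (f : R -> R) :
  clamped_continuous f -> (forall t, 0 <= t -> f t <> 0) -> clamped_continuous (fun s => / f s).
Proof.
  intros Hf Hnz t; apply (continuous_Rinv_comp (fun s => f (Rmax s 0))); auto.
  apply Hnz, Rmax_r.
Qed.

#[local] Hint Resolve clamped_continuous_const clamped_continuous_id
  clamped_continuous_plus clamped_continuous_opp clamped_continuous_minus
  clamped_continuous_mult clamped_continuous_exp : clamped.

Lemma is_derive_Rmult (f g : R -> R) (t df dg : R) :
  is_derive f t df -> is_derive g t dg ->
  is_derive (fun s => f s * g s) t (df * g t + f t * dg).
Proof. intros Hf Hg; apply (is_derive_mult f g); auto; intros; apply Rmult_comm. Qed.

(* The MVT point may be an endpoint, where nothing is known about [h']; hence [Rmax 0 h']. *)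
Lemma nondecreasing_of_derive_nonneg (h h' : R -> R) (T : R) :
  0 <= T -> clamped_continuous h ->
  (forall t, 0 < t < T -> is_derive h t (h' t)) ->
  (forall t, 0 < t < T -> 0 <= h' t) -> h 0 <= h T.
Proof.
  intros HT Hc Hd Hpos.
  destruct (MVT_gen (fun s => h (Rmax s 0)) 0 T (fun s => Rmax 0 (h' s))) as [c [_ Hmvt]].
  - rewrite Rmin_left, Rmax_right by lra; intros s Hs.
    rewrite Rmax_right by (apply Hpos; lra).
    apply is_derive_ext_loc with h; [|apply Hd; lra].
    apply locally_interval with 0 p_infty; simpl; auto; try lra.
    intros w Hw _; rewrite Rmax_left; lra.
  - intros s _; apply continuity_pt_filterlim, Hc.
  - simpl in Hmvt; rewrite (Rmax_left T 0), (Rmax_left 0 0) in Hmvt by lra.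
    pose proof (Rmax_l 0 (h' c)); nra.
Qed.

Lemma Rabs_sub_le_of_derive (h h' g g' : R -> R) (T : R) :
  0 <= T -> clamped_continuous h -> clamped_continuous g ->
  (forall t, 0 < t < T -> is_derive h t (h' t)) ->
  (forall t, 0 < t < T -> is_derive g t (g' t)) ->
  (forall t, 0 < t < T -> Rabs (h' t) <= g' t) ->
  Rabs (h T - h 0) <= g T - g 0.
Proof.
  intros HT Hch Hcg Hdh Hdg Hle.
  assert (Hlo := nondecreasing_of_derive_nonneg (fun s => g s - h s) (fun s => g' s - h' s) T HT).
  assert (Hhi := nondecreasing_of_derive_nonneg (fun s => g s + h s) (fun s => g' s + h' s) T HT).
  apply Rabs_le; split; [cut (g 0 + h 0 <= g T + h T)|cut (g 0 - h 0 <= g T - h T)]; try lra.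
  - apply Hhi; auto with clamped.
    + intros t Ht; apply (is_derive_plus g h); auto.
    + intros t Ht; specialize (Hle t Ht); apply Rabs_le_between in Hle; lra.
  - apply Hlo; auto with clamped.
    + intros t Ht; apply (is_derive_minus g h); auto.
    + intros t Ht; specialize (Hle t Ht); apply Rabs_le_between in Hle; lra.
Qed.

Lemma eq_of_derive_zero (h : R -> R) (T : R) :
  0 <= T -> clamped_continuous h -> (forall t, 0 < t < T -> is_derive h t 0) -> h T = h 0.
Proof.
  intros HT Hc Hd.
  assert (H := Rabs_sub_le_of_derive h (fun _ => 0) (fun _ => 0) (fun _ => 0) T HT Hc).
  cut (Rabs (h T - h 0) <= 0); [pose proof (Rabs_pos (h T - h 0)); intros;
    apply Rminus_diag_uniq, Rabs_eq_0; lra|].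
  replace 0 with (0 - 0) at 2 by ring.
  apply H; auto with clamped.
  - intros s _; apply (is_derive_const 0 s).
  - intros; rewrite Rabs_R0; lra.
Qed.

(* If [|g| <= M] on [0, T], then [f^2 e^(2 M s)] is nondecreasing on [0, T]. *)
Lemma nonvanishing_of_derive_mul (f g : R -> R) (T : R) :
  0 <= T -> clamped_continuous f -> clamped_continuous g ->
  (forall t, 0 < t -> is_derive f t (f t * g t)) -> f 0 <> 0 ->
  forall t, 0 <= t <= T -> f t <> 0.
Proof.
  intros HT Hf Hg Hd Hf0.
  destruct (continuity_ab_maj (fun s => Rabs (g (Rmax s 0))) 0 T HT) as [tM [HM _]].
  { intros s _; apply continuity_pt_filterlim.
    apply (continuous_comp (fun s => g (Rmax s 0)) Rabs); [apply Hg|apply continuous_Rabs]. }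
  set (M := Rabs (g (Rmax tM 0))) in HM.
  intros t Ht Hft.
  assert (Hgrowth : f 0 * f 0 * exp (2 * M * 0) <= f t * f t * exp (2 * M * t)).
  { apply (nondecreasing_of_derive_nonneg (fun s => f s * f s * exp (2 * M * s))
      (fun s => 2 * (f s * f s * exp (2 * M * s)) * (g s + M))); try lra; auto with clamped.
    - intros s Hs.
      replace (2 * (f s * f s * exp (2 * M * s)) * (g s + M)) with
        ((f s * g s * f s + f s * (f s * g s)) * exp (2 * M * s)
         + f s * f s * (2 * M * exp (2 * M * s))) by ring.
      apply (is_derive_Rmult (fun s => f s * f s) (fun s => exp (2 * M * s)));
        [apply is_derive_Rmult; apply Hd; lra|].
      auto_derive; auto; ring.
    - intros s Hs.
      assert (HMs := HM s ltac:(lra)); simpl in HMs; rewrite Rmax_left in HMs by lra.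
      apply Rabs_le_between in HMs; fold M in HMs.
      pose proof (exp_pos (2 * M * s)); pose proof (Rle_0_sqr (f s)); unfold Rsqr in *.
      apply Rmult_le_pos; [apply Rmult_le_pos; [lra|apply Rmult_le_pos; lra]|lra]. }
  rewrite Hft, Rmult_0_r, exp_0 in Hgrowth.
  apply Hf0; nra.
Qed.

Lemma pos_of_derive_mul (f g : R -> R) :
  clamped_continuous f -> clamped_continuous g ->
  (forall t, 0 < t -> is_derive f t (f t * g t)) -> 0 < f 0 ->
  forall t, 0 <= t -> 0 < f t.
Proof.
  intros Hf Hg Hd Hf0 t Ht.
  destruct (Rlt_le_dec 0 (f t)) as [|Hle]; auto; exfalso.
  destruct (IVT_gen (fun s => f (Rmax s 0)) 0 t 0) as [c [Hc Hfc]].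
  - intros s; apply continuity_pt_filterlim, Hf.
  - rewrite (Rmax_left 0 0), (Rmax_left t 0), Rmin_right, Rmax_left; lra.
  - rewrite Rmin_left, Rmax_right in Hc by lra; rewrite Rmax_left in Hfc by lra.
    apply (nonvanishing_of_derive_mul f g t Ht Hf Hg Hd ltac:(lra) c); auto.
Qed.

Lemma ln_eq_of_derive (x z g : R -> R) :
  clamped_continuous x -> clamped_continuous z ->
  (forall t, 0 < t -> is_derive x t (g t)) ->
  (forall t, 0 < t -> is_derive z t (z t * g t)) ->
  (forall t, 0 <= t -> 0 < z t) -> x 0 = ln (z 0) ->
  forall t, 0 <= t -> x t = ln (z t).
Proof.
  intros Hx Hz Hdx Hdz Hzpos Hx0 t Ht.
  assert (Hconst : z t * exp (- x t) = z 0 * exp (- x 0)).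
  { apply (eq_of_derive_zero (fun s => z s * exp (- x s))); auto with clamped.
    intros s Hs.
    replace 0 with (z s * g s * exp (- x s) + z s * (- g s * exp (- x s))) by ring.
    apply (is_derive_Rmult z (fun s => exp (- x s))); [apply Hdz; lra|].
    apply (is_derive_comp exp (fun s => - x s)); [apply is_derive_exp|].
    apply (is_derive_opp x); apply Hdx; lra. }
  assert (Hz0 := Hzpos 0 (Rle_refl 0)).
  rewrite Hx0, !exp_Ropp, exp_ln, Rinv_r in Hconst by lra.
  assert (Hzt : z t = exp (x t)).
  { pose proof (exp_pos (x t)).
    apply (Rmult_eq_reg_r (/ exp (x t))); [|apply Rinv_neq_0_compat; lra].
    rewrite Hconst, Rinv_r; lra. }
  now rewrite Hzt, ln_exp.
Qed.

Definition exp_close (f : R -> R) (L r C : R) : Prop :=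
  forall t, 0 <= t -> Rabs (f t - L) <= C * exp (- r * t).

Lemma exp_le_compat (s t : R) : s <= t -> exp s <= exp t.
Proof. intros [Hlt|Heq]; [left; now apply exp_increasing|subst; lra]. Qed.

Lemma exp_close_nonneg (f : R -> R) (L r C : R) : exp_close f L r C -> 0 <= C.
Proof.
  intros H; specialize (H 0 (Rle_refl 0)); rewrite Rmult_0_r, exp_0 in H.
  pose proof (Rabs_pos (f 0 - L)); lra.
Qed.

Lemma exp_close_le_rate (f : R -> R) (L r r' C : R) :
  r' <= r -> exp_close f L r C -> exp_close f L r' C.
Proof.
  intros Hr H t Ht; eapply Rle_trans; [now apply H|].
  apply Rmult_le_compat_l; [eapply exp_close_nonneg; eauto|].
  apply exp_le_compat; nra.
Qed.

Lemma conv_rate_atleast_le (f : R -> R) (L rho rho' : R) :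
  rho' <= rho -> conv_rate_atleast f L rho -> conv_rate_atleast f L rho'.
Proof. intros Hle H r Hr; apply H; lra. Qed.

Lemma conv_rate_of_pos (f : R -> R) (L rho : R) : 0 < rho ->
  (forall r, 0 < r < rho -> exists C, exp_close f L r C) -> conv_rate_atleast f L rho.
Proof.
  intros Hrho H r Hr.
  destruct (H (Rmax r (rho / 2))) as [C HC].
  - split; [apply Rlt_le_trans with (rho / 2); [lra|apply Rmax_r]|apply Rmax_lub_lt; lra].
  - exists C; apply exp_close_le_rate with (Rmax r (rho / 2)); auto; apply Rmax_l.
Qed.

Lemma exp_decay_eventually_lt (C r eps : R) : 0 < r -> 0 < eps ->
  exists T, forall t, T < t -> C * exp (- r * t) < eps.
Proof.
  intros Hr Heps.
  set (C1 := Rmax C 1).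
  assert (HC1 : 1 <= C1) by apply Rmax_r; assert (HCC1 : C <= C1) by apply Rmax_l.
  exists (ln (C1 / eps) / r); intros t Ht.
  assert (Hexp : C1 / eps < exp (r * t)).
  { rewrite <- (exp_ln (C1 / eps)) by (apply Rdiv_lt_0_compat; lra).
    apply exp_increasing.
    apply (Rmult_lt_compat_r r) in Ht; auto; field_simplify in Ht; lra. }
  replace (- r * t) with (- (r * t)) by ring; rewrite exp_Ropp.
  pose proof (exp_pos (r * t)).
  apply Rle_lt_trans with (C1 * / exp (r * t)).
  { apply Rmult_le_compat_r; auto; left; now apply Rinv_0_lt_compat. }
  apply (Rmult_lt_reg_r (exp (r * t))); auto.
  rewrite Rmult_assoc, Rinv_l, Rmult_1_r by lra.
  apply (Rmult_lt_compat_l eps) in Hexp; auto; field_simplify in Hexp; lra.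
Qed.

Lemma is_lim_of_conv_rate (f : R -> R) (L rho : R) :
  0 < rho -> conv_rate_atleast f L rho -> is_lim f p_infty L.
Proof.
  intros Hrho H; apply is_lim_spec; intros eps.
  destruct (H (rho / 2) ltac:(lra)) as [C HC].
  destruct (exp_decay_eventually_lt C (rho / 2) eps) as [T HT]; [lra|apply cond_pos|].
  exists (Rmax T 0); intros t Ht.
  eapply Rle_lt_trans; [apply HC|apply HT].
  - apply Rle_trans with (Rmax T 0); [apply Rmax_r|lra].
  - apply Rle_lt_trans with (Rmax T 0); [apply Rmax_l|auto].
Qed.

(* Variation of constants: [(e^s (f s - L))' = e^s (g s - L)], and [|e^s (g s - L)| <= K e^((1-r) s)]. *)
Lemma linear_exp_close (f g : R -> R) (L r K : R) :
  clamped_continuous f -> 0 < r < 1 ->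
  (forall t, 0 < t -> is_derive f t (- f t + g t)) ->
  exp_close g L r K -> exp_close f L r (Rabs (f 0 - L) + K / (1 - r)).
Proof.
  intros Hf Hr Hd Hg t Ht.
  assert (HK := exp_close_nonneg g L r K Hg).
  set (B := K / (1 - r)).
  assert (HB : 0 <= B) by (apply Rdiv_le_0_compat; lra).
  assert (Hvar : Rabs (exp t * (f t - L) - exp 0 * (f 0 - L))
                 <= B * exp ((1 - r) * t) - B * exp ((1 - r) * 0)).
  { apply (Rabs_sub_le_of_derive (fun s => exp s * (f s - L)) (fun s => exp s * (g s - L))
      (fun s => B * exp ((1 - r) * s)) (fun s => K * exp ((1 - r) * s))); auto with clamped.
    - intros s Hs.
      replace (exp s * (g s - L)) with (exp s * (f s - L) + exp s * (- f s + g s - 0)) by ring.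
      apply (is_derive_Rmult exp (fun s => f s - L)); [apply is_derive_exp|].
      apply (is_derive_minus f (fun _ => L)); [apply Hd; lra|apply (is_derive_const L s)].
    - intros s _; unfold B; auto_derive; auto; field; lra.
    - intros s Hs; rewrite Rabs_mult, Rabs_pos_eq by (left; apply exp_pos).
      replace ((1 - r) * s) with (s + - r * s) by ring; rewrite exp_plus, <- Rmult_assoc,
        (Rmult_comm K), Rmult_assoc.
      apply Rmult_le_compat_l; [left; apply exp_pos|apply Hg; lra]. }
  replace ((1 - r) * t) with (t + - r * t) in Hvar by ring.
  rewrite exp_plus, Rmult_0_r, exp_0, Rmult_1_l, Rmult_1_r in Hvar.
  set (E := exp t) in *; set (F := exp (- r * t)) in *.
  assert (HE : 0 < E) by apply exp_pos.
  assert (HEF : 1 <= E * F).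
  { unfold E, F; rewrite <- exp_plus, <- exp_0; apply exp_le_compat; nra. }
  assert (Htri : E * Rabs (f t - L) <= B * (E * F) - B + Rabs (f 0 - L)).
  { replace (E * Rabs (f t - L)) with (Rabs (E * (f t - L)))
      by (rewrite Rabs_mult, Rabs_pos_eq; lra).
    pose proof (Rabs_triang_inv (E * (f t - L)) (f 0 - L)); lra. }
  pose proof (Rabs_pos (f 0 - L)).
  apply (Rmult_le_reg_l E); auto; nra.
Qed.

Lemma linear_lower_bound (f g : R -> R) :
  clamped_continuous f -> (forall t, 0 < t -> is_derive f t (- f t + g t)) ->
  (forall t, 0 < t -> 0 < g t) -> forall t, 0 <= t -> f 0 * exp (- t) <= f t.
Proof.
  intros Hf Hd Hg t Ht.
  assert (H : exp 0 * f 0 <= exp t * f t).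
  { apply (nondecreasing_of_derive_nonneg (fun s => exp s * f s) (fun s => exp s * g s));
      auto with clamped.
    - intros s Hs; replace (exp s * g s) with (exp s * f s + exp s * (- f s + g s)) by ring.
      apply (is_derive_Rmult exp f); [apply is_derive_exp|apply Hd; lra].
    - intros s Hs; left; apply Rmult_lt_0_compat; [apply exp_pos|apply Hg; lra]. }
  rewrite exp_0, Rmult_1_l in H.
  apply (Rmult_le_reg_l (exp t)); [apply exp_pos|].
  replace (exp t * (f 0 * exp (- t))) with (f 0 * exp (t + - t)) by (rewrite exp_plus; ring).
  rewrite Rplus_opp_r, exp_0; lra.
Qed.

Lemma pos_lower_bound_of_exp_close (f : R -> R) (L r C : R) :
  0 < L -> 0 < r -> 0 < f 0 -> (forall t, 0 <= t -> f 0 * exp (- t) <= f t) ->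
  exp_close f L r C -> exists m, 0 < m /\ forall t, 0 <= t -> m <= f t.
Proof.
  intros HL Hr Hf0 Hlow HC.
  destruct (exp_decay_eventually_lt C r (L / 2)) as [T HT]; [lra|lra|].
  set (T0 := Rmax T 0).
  exists (Rmin (L / 2) (f 0 * exp (- T0))); split.
  { apply Rmin_pos; [lra|apply Rmult_lt_0_compat; [lra|apply exp_pos]]. }
  intros t Ht; destruct (Rle_lt_dec t T0) as [Hle|Hlt].
  - apply Rle_trans with (f 0 * exp (- T0)); [apply Rmin_r|].
    apply Rle_trans with (f 0 * exp (- t)); [|now apply Hlow].
    apply Rmult_le_compat_l; [lra|apply exp_le_compat; lra].
  - apply Rle_trans with (L / 2); [apply Rmin_l|].
    assert (Hclose : Rabs (f t - L) < L / 2).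
    { eapply Rle_lt_trans; [now apply HC|apply HT].
      apply Rle_lt_trans with T0; [apply Rmax_l|auto]. }
    apply Rabs_def2 in Hclose; lra.
Qed.

Lemma inv_exp_close (u : R -> R) (L r C m : R) :
  0 < m -> 0 < L -> (forall t, 0 <= t -> m <= u t) ->
  exp_close u L r C -> exp_close (fun t => / u t) (/ L) r (C / (m * L)).
Proof.
  intros Hm HL Hlow HC t Ht.
  assert (Hut := Hlow t Ht).
  replace (/ u t - / L) with ((L - u t) / (u t * L)) by (field; lra).
  rewrite Rabs_div, Rabs_minus_sym, (Rabs_pos_eq (u t * L)) by nra.
  replace (C / (m * L) * exp (- r * t)) with (C * exp (- r * t) / (m * L)) by (field; lra).
  apply Rle_trans with (Rabs (u t - L) / (m * L)).
  - apply Rmult_le_compat_l; [apply Rabs_pos|apply Rinv_le_contravar; nra].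
  - apply Rmult_le_compat_r; [left; apply Rinv_0_lt_compat; nra|now apply HC].
Qed.

Lemma Rabs_ln_sub_le (p q m : R) :
  0 < m -> m <= p -> m <= q -> Rabs (ln p - ln q) <= Rabs (p - q) / m.
Proof.
  assert (Hone : forall p q, m <= p -> m <= q -> 0 < m -> ln p - ln q <= Rabs (p - q) / m).
  { intros p' q' Hp Hq Hm.
    rewrite <- ln_div by lra.
    assert (H := exp_ineq1_le (ln (p' / q'))); rewrite exp_ln in H by (apply Rdiv_lt_0_compat; lra).
    apply Rle_trans with ((p' - q') / q'); [replace ((p' - q') / q') with (p' / q' - 1) by (field; lra); lra|].
    apply Rle_trans with (Rabs (p' - q') / q').
    - apply Rmult_le_compat_r; [left; apply Rinv_0_lt_compat; lra|apply Rle_abs].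
    - apply Rmult_le_compat_l; [apply Rabs_pos|apply Rinv_le_contravar; lra]. }
  intros Hm Hp Hq; apply Rabs_le; split.
  - rewrite Rabs_minus_sym; pose proof (Hone q p Hq Hp Hm); lra.
  - now apply Hone.
Qed.

Lemma ln_exp_close (u : R -> R) (L r C m : R) :
  0 < m -> m <= L -> (forall t, 0 <= t -> m <= u t) ->
  exp_close u L r C -> exp_close (fun t => ln (u t)) (ln L) r (C / m).
Proof.
  intros Hm HL Hlow HC t Ht.
  eapply Rle_trans; [apply (Rabs_ln_sub_le _ _ m); auto|].
  replace (C / m * exp (- r * t)) with (C * exp (- r * t) / m) by (field; lra).
  apply Rmult_le_compat_r; [left; now apply Rinv_0_lt_compat|now apply HC].
Qed.

(* [1 / f] solves the linear equation [u' = - u + c]. *)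
Lemma logistic_conv_rate (f c : R -> R) (L rho : R) :
  clamped_continuous f -> 0 < L -> 0 < rho <= 1 ->
  (forall t, 0 <= t -> 0 < f t) -> (forall t, 0 < t -> 0 < c t) ->
  (forall t, 0 < t -> is_derive f t (f t * (1 - c t * f t))) ->
  conv_rate_atleast c L rho ->
  conv_rate_atleast f (/ L) rho /\ conv_rate_atleast (fun t => ln (f t)) (- ln L) rho.
Proof.
  intros Hf HL Hrho Hfpos Hcpos Hd Hc.
  set (u := fun t => / f t).
  assert (Hu : clamped_continuous u).
  { apply clamped_continuous_inv; auto; intros t Ht; specialize (Hfpos t Ht); lra. }
  assert (Hdu : forall t, 0 < t -> is_derive u t (- u t + c t)).
  { intros t Ht; assert (Hft := Hfpos t ltac:(lra)).
    replace (- u t + c t) with (- (f t * (1 - c t * f t)) / f t ^ 2) by (unfold u; field; lra).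
    apply is_derive_inv; [apply Hd|]; lra. }
  assert (Hu0 : 0 < u 0) by (apply Rinv_0_lt_compat, Hfpos; lra).
  destruct (Hc (rho / 2) ltac:(lra)) as [Kc HKc].
  destruct (pos_lower_bound_of_exp_close u L (rho / 2) _ HL ltac:(lra) Hu0
      (linear_lower_bound u c Hu Hdu Hcpos)
      (linear_exp_close u c L (rho / 2) Kc Hu ltac:(lra) Hdu HKc)) as [m [Hm Hmu]].
  set (m' := Rmin m L).
  assert (Hm' : 0 < m') by (apply Rmin_pos; lra).
  assert (Hm'L : m' <= L) by apply Rmin_r.
  assert (Hm'u : forall t, 0 <= t -> m' <= u t).
  { intros t Ht; apply Rle_trans with m; [apply Rmin_l|auto]. }
  split; apply conv_rate_of_pos; try lra; intros r Hr;
    destruct (Hc r ltac:(lra)) as [K HK];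
    set (Ku := Rabs (u 0 - L) + K / (1 - r));
    assert (Hclose : exp_close u L r Ku) by (apply linear_exp_close with c; auto; lra).
  - exists (Ku / (m' * L)); intros t Ht.
    rewrite <- (Rinv_inv (f t)); apply (inv_exp_close u L r Ku m'); auto.
  - exists (Ku / m'); intros t Ht.
    assert (Hut : 0 < u t) by (apply Rinv_0_lt_compat, Hfpos; lra).
    rewrite <- (Rinv_inv (f t)), ln_Rinv by auto.
    change (/ f t) with (u t).
    replace (- ln (u t) - - ln L) with (- (ln (u t) - ln L)) by ring.
    rewrite Rabs_Ropp; apply (ln_exp_close u L r Ku m'); auto.
Qed.

Theorem lemma4p3 (a : R -> R) (astar rho_a : R) (y x z : R -> R) :
  continuous_on_nonneg a ->
  (forall t, 0 <= t -> 0 < a t) ->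
  0 < astar -> 0 < rho_a ->
  conv_rate_atleast a astar rho_a ->
  continuous_on_nonneg y -> continuous_on_nonneg x -> continuous_on_nonneg z ->
  (forall t, 0 < t -> is_derive y t (y t * (1 - a t * y t))) ->
  (forall t, 0 < t -> is_derive x t (1 - y t * z t)) ->
  (forall t, 0 < t -> is_derive z t (z t * (1 - y t * z t))) ->
  0 < y 0 -> 0 < z 0 -> x 0 = ln (z 0) ->
  is_lim y p_infty (/ astar) /\
  is_lim z p_infty astar /\
  (forall t, 0 <= t -> x t = ln (z t)) /\
  conv_rate_atleast x (ln astar) (Rmin rho_a 1).
Proof.
  intros Ha Hapos Has Hrho_a Harate Hy Hx Hz Hdy Hdx Hdz Hy0 Hz0 Hx0.
  apply clamped_continuous_of_nonneg in Ha, Hy, Hx, Hz.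
  set (rho := Rmin rho_a 1).
  assert (Hrho : 0 < rho <= 1) by (split; [apply Rmin_pos|apply Rmin_r]; lra).
  assert (Hypos : forall t, 0 <= t -> 0 < y t).
  { apply (pos_of_derive_mul y (fun s => 1 - a s * y s)); auto with clamped. }
  assert (Hzpos : forall t, 0 <= t -> 0 < z t).
  { apply (pos_of_derive_mul z (fun s => 1 - y s * z s)); auto with clamped. }
  assert (Hxz : forall t, 0 <= t -> x t = ln (z t)).
  { apply (ln_eq_of_derive x z (fun s => 1 - y s * z s)); auto. }
  destruct (logistic_conv_rate y a astar rho) as [Hyrate _]; auto.
  { intros t Ht; apply Hapos; lra. }
  { apply conv_rate_atleast_le with rho_a; [apply Rmin_l|auto]. }
  destruct (logistic_conv_rate z y (/ astar) rho) as [Hzrate Hlnzrate]; auto.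
  { now apply Rinv_0_lt_compat. }
  { intros t Ht; apply Hypos; lra. }
  rewrite Rinv_inv in Hzrate; rewrite ln_Rinv, Ropp_involutive in Hlnzrate by auto.
  split; [apply (is_lim_of_conv_rate y _ rho); [lra|exact Hyrate]|].
  split; [apply (is_lim_of_conv_rate z _ rho); [lra|exact Hzrate]|].
  split; [exact Hxz|].
  intros r Hr; destruct (Hlnzrate r Hr) as [C HC].
  exists C; intros t Ht; rewrite Hxz; auto.
Qed.
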